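(* Let $N,d\in\mathbb{N}^*$, $\alpha>0$, and for $i\neq j$ let $\Psi_{ij}:\mathbb{R}^{2dN}\to\mathbb{R}_+$ be non-negative, bounded and locally Lipschitz. Let $(x_i,v_i)_i$ be a solution on $\mathbb{R}_+$ of $\frac{dx_i}{dt}=v_i$, $\frac{dv_i}{dt}=\alpha\sum_jQ_t(i,j)(v_j-v_i)$, where $Q_t(i,j)=\Psi_{ij}((x_k(t),v_k(t))_k)$ for $i\ne j$ and $Q_t(i,i)=-\sum_{j\ne i}Q_t(i,j)$, and let $(P^*_{s,t})_{0\le s\le t}$ be the solution on $\mathbb{R}_+$ of $P^*_{t,t}=I$, $\partial_tP^*_{s,t}=\alpha Q_tP^*_{s,t}$, $\partial_sP^*_{s,t}=-\alpha P^*_{s,t}Q_s$. Suppose there exists $C:\mathbb{R}_+^2\to\mathbb{R}_+$ such that (a) for all $t\ge0$, $r\mapsto C(t,r)$ is increasing; (b) for all $r\ge X(0)$, $C(t,r)\to0$ as $t\to+\infty$; (c) for all $t\ge0$, $1-\mu(P^*_{0,t})\le C(t,\sup_{s\le t}X(s))$. If there exists $r_0\ge X(0)$ with $$r_0-X(0)>V(0)\int_0^{+\infty}C(s,r_0)\,ds,$$ then the solution flocks: $\sup_{t\ge0}X(t)<+\infty$ and $V(t)\to0$ as $t\to+\infty$.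
   Context: $X(t)=\sup_{i,j}\|x_i(t)-x_j(t)\|_2$, $V(t)=\sup_{i,j}\|v_i(t)-v_j(t)\|_2$. The Dobrushin ergodicity coefficient of a stochastic matrix $P$ is $\mu(P)=\inf_{i,j}\sum_kP(i,k)\wedge P(j,k)$, with $a\wedge b=\min(a,b)$. *)

From HB Require Import structures.
From mathcomp Require Import all_boot all_order all_algebra.
From mathcomp Require Import all_classical all_reals all_analysis.
Set Implicit Arguments. Unset Strict Implicit. Unset Printing Implicit Defensive.
Import Order.TTheory GRing.Theory Num.Theory.
Import numFieldNormedType.Exports.
Local Open Scope ring_scope.
Local Open Scope classical_set_scope.

Definition enorm (R : realType) (d : nat) (u : 'rV[R]_d) : R :=
  Num.sqrt (\sum_(k < d) u 0 k ^+ 2).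

(* Given positions (x_i)_i stored as the rows of an N x d matrix,
   diam x = sup_{i,j} ||x_i - x_j||_2 (used for both X(t) and V(t)). *)
Definition diam (R : realType) (N d : nat) (x : 'M[R]_(N, d)) : R :=
  sup [set enorm (row i x - row j x) | i in [set: 'I_N] & j in [set: 'I_N]].

Definition dobrushin (R : realType) (N : nat) (P : 'M[R]_N) : R :=
  inf [set \sum_(k < N) Num.min (P i k) (P j k) | i in [set: 'I_N] & j in [set: 'I_N]].

Definition Qmat (R : realType) (N d : nat)
  (Psi : 'I_N -> 'I_N -> 'M[R]_(N, d) -> 'M[R]_(N, d) -> R)
  (x v : 'M[R]_(N, d)) : 'M[R]_N :=
  \matrix_(i, j) (if i == j then - \sum_(k < N | k != i) Psi i k x v
                  else Psi i j x v).

Definition align_force (R : realType) (N d : nat) (alpha : R)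
  (Q : 'M[R]_N) (v : 'M[R]_(N, d)) : 'M[R]_(N, d) :=
  \matrix_(i, k) (alpha * \sum_(j < N) Q i j * (v j k - v i k)).

(* Local Lipschitz continuity of a function of the configuration (x,v) in R^{2dN}
   (norm: |x| + |v|, any norm being equivalent). *)
Definition locally_lipschitz2 (R : realType) (N d : nat)
  (f : 'M[R]_(N, d) -> 'M[R]_(N, d) -> R) : Prop :=
  forall x0 v0 : 'M[R]_(N, d), exists r : R, 0 < r /\ exists L : R,
    forall x1 v1 x2 v2 : 'M[R]_(N, d),
      `|x1 - x0| < r -> `|v1 - v0| < r -> `|x2 - x0| < r -> `|v2 - v0| < r ->
      `|f x1 v1 - f x2 v2| <= L * (`|x1 - x2| + `|v1 - v2|).

From HB Require Import structures.
From mathcomp Require Import all_boot all_order all_algebra.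
From mathcomp Require Import all_classical all_reals all_analysis.
From mathcomp Require Import ring lra.
Set Implicit Arguments. Unset Strict Implicit. Unset Printing Implicit Defensive.
Import Order.TTheory GRing.Theory Num.Theory.
Import numFieldNormedType.Exports.
Local Open Scope ring_scope.
Local Open Scope classical_set_scope.

(* The velocities solve the linear consensus system v' = alpha Q_t v, whose fundamental
   matrix P*_{0,t} is row-stochastic, so v(t) = P*_{0,t} v(0); coupling two rows of
   P*_{0,t} gives V(t) <= (1 - mu(P*_{0,t})) V(0).  While X stays below r0 on [0,t],
   hypotheses (a) and (c) turn this into V(t) <= C(t,r0) V(0), and integrating x' = v yields
   X(t) <= X(0) + V(0) \int_0^oo C(s,r0) ds < r0.  A first-exit-time argument therefore keeps
   X below r0 forever, and then V(t) <= C(t,r0) V(0) -> 0 by (b). *)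

Section euclidean_norm.
Variables (R : realType) (d : nat).
Implicit Types u e : 'rV[R]_d.

Lemma enorm_ge0 u : 0 <= enorm u.
Proof. exact: sqrtr_ge0. Qed.

Lemma enorm_sqr u : enorm u ^+ 2 = \sum_(k < d) u 0 k ^+ 2.
Proof. by rewrite sqr_sqrtr // sumr_ge0 // => k _; exact: sqr_ge0. Qed.

Lemma mul_tr_entry u e : (u *m e^T) 0 0 = \sum_(k < d) u 0 k * e 0 k.
Proof. by rewrite mxE; apply: eq_bigr => k _; rewrite mxE. Qed.

Lemma mul_tr_le_enorm u e : enorm e <= 1 -> (u *m e^T) 0 0 <= enorm u.
Proof.
move=> e_le1; rewrite mul_tr_entry; set A := enorm u; set s := \sum_k _.
have [A0 | A_neq0] := eqVneq A 0.
  have u0 k : u 0 k = 0.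
    have u2_eq0 : \sum_(l < d) u 0 l ^+ 2 = 0 by rewrite -enorm_sqr -/A A0 expr0n.
    apply/eqP; rewrite -sqrf_eq0; apply/eqP.
    by apply: (psumr_eq0P _ u2_eq0) => // l _; exact: sqr_ge0.
  by rewrite /s big1 ?A0 // => k _; rewrite u0 mul0r.
have A_gt0 : 0 < A by rewrite lt_def A_neq0; exact: enorm_ge0.
have e0 := enorm_ge0 e.
have : 0 <= \sum_(k < d) (u 0 k - A * e 0 k) ^+ 2 by apply: sumr_ge0 => k _; exact: sqr_ge0.
have -> : \sum_(k < d) (u 0 k - A * e 0 k) ^+ 2 =
    \sum_(k < d) u 0 k ^+ 2 - 2 * A * s + A ^+ 2 * \sum_(k < d) e 0 k ^+ 2.
  by rewrite /s !mulr_sumr -sumrB -big_split /=; apply: eq_bigr => k _; ring.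
rewrite -!enorm_sqr -/A => h.
have e2_le1 : enorm e ^+ 2 <= 1 by rewrite expr_le1.
have : A * s <= A * A by nra.
by rewrite ler_pM2l.
Qed.

Lemma exists_enorm_dual u : exists2 e, enorm e <= 1 & (u *m e^T) 0 0 = enorm u.
Proof.
have [u0 | u_neq0] := eqVneq (enorm u) 0.
  exists 0; first by rewrite /enorm big1 ?sqrtr0 // => k _; rewrite mxE expr0n.
  by rewrite trmx0 mulmx0 mxE u0.
have u_gt0 : 0 < enorm u by rewrite lt_def u_neq0 enorm_ge0.
exists ((enorm u)^-1 *: u).
  rewrite /enorm (eq_bigr (fun k => (enorm u)^-2 * u 0 k ^+ 2)); last first.
    by move=> k _; rewrite mxE exprMn exprVn.
  by rewrite -mulr_sumr -enorm_sqr mulVf ?sqrtr1 // expf_neq0.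
rewrite mul_tr_entry (eq_bigr (fun k => (enorm u)^-1 * u 0 k ^+ 2)); last first.
  by move=> k _; rewrite mxE; ring.
by rewrite -mulr_sumr -enorm_sqr expr2 mulrA mulVf ?mul1r.
Qed.

End euclidean_norm.

Section diameter.
Variables (R : realType) (N d : nat).
Implicit Types M : 'M[R]_(N, d).

Lemma row_dist_le_diam M i j : enorm (row i M - row j M) <= diam M.
Proof.
apply: sup_upper_bound; last by exists i => //; exists j.
split; first by exists (enorm (row i M - row j M)); exists i => //; exists j.
exists (\big[Num.max/0]_(p : 'I_N * 'I_N) enorm (row p.1 M - row p.2 M)).
by move=> _ [a _ [b _ <-]]; exact: (le_bigmax _ _ (a, b)).
Qed.

Lemma mul_tr_rowB M (e : 'rV[R]_d) i j :
  ((row i M - row j M) *m e^T) 0 0 = (M *m e^T) i 0 - (M *m e^T) j 0.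
Proof. by rewrite mulmxBl -!row_mul !mxE. Qed.

Lemma mul_tr_diff_le_diam M (e : 'rV[R]_d) i j :
  enorm e <= 1 -> (M *m e^T) i 0 - (M *m e^T) j 0 <= diam M.
Proof.
by move=> e_le1; rewrite -mul_tr_rowB (le_trans (mul_tr_le_enorm _ e_le1)) ?row_dist_le_diam.
Qed.

Lemma row_dist_dual M i j : exists2 e : 'rV[R]_d,
  enorm e <= 1 & enorm (row i M - row j M) = (M *m e^T) i 0 - (M *m e^T) j 0.
Proof.
by have [e e_le1 <-] := exists_enorm_dual (row i M - row j M); exists e; rewrite ?mul_tr_rowB.
Qed.

Hypothesis N_gt0 : (0 < N)%N.

Lemma diam_le M c : (forall i j, enorm (row i M - row j M) <= c) -> diam M <= c.
Proof.
move=> le_c; apply: ge_sup; last by move=> _ [a _ [b _ <-]]; exact: le_c.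
by exists (enorm (row (Ordinal N_gt0) M - row (Ordinal N_gt0) M));
  exists (Ordinal N_gt0) => //; exists (Ordinal N_gt0).
Qed.

Lemma diam_ge0 M : 0 <= diam M.
Proof. exact: le_trans (enorm_ge0 _) (row_dist_le_diam M (Ordinal N_gt0) (Ordinal N_gt0)). Qed.

Lemma diamE M :
  diam M = \big[Num.max/0]_(p : 'I_N * 'I_N) enorm (row p.1 M - row p.2 M).
Proof.
apply/eqP; rewrite eq_le diam_le /=; last by move=> i j; exact: (le_bigmax _ _ (i, j)).
by rewrite bigmax_le ?diam_ge0 // => p _; exact: row_dist_le_diam.
Qed.

End diameter.

Section dobrushin_contraction.
Variables (R : realType) (N d : nat).

Lemma dobrushin_le (P : 'M[R]_N) i j :
  dobrushin P <= \sum_(k < N) Num.min (P i k) (P j k).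
Proof.
apply: ge_inf; last by exists i => //; exists j.
exists (\sum_(k < N) - \big[Num.max/0]_(l < N) `|P l k|).
move=> _ [a _ [b _ <-]]; apply: ler_sum => k _.
have le_max l : - (\big[Num.max/0]_(l < N) `|P l k|) <= P l k.
  by rewrite lerNl (le_trans _ (le_bigmax _ _ l)) // -normrN ler_norm.
by rewrite le_min !le_max.
Qed.

Lemma sum_mul_diff_le (a b y : 'I_N -> R) c :
  (forall k, 0 <= a k) -> (forall k, 0 <= b k) -> \sum_k a k = \sum_k b k ->
  (forall k l, y k - y l <= c) ->
  \sum_k a k * y k - \sum_k b k * y k <= (\sum_k a k) * c.
Proof.
move=> a_ge0 b_ge0 sab y_le; set s := \sum_k a k in sab *.
have s_ge0 : 0 <= s by exact: sumr_ge0.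
have [s0 | s_neq0] := eqVneq s 0.
  have a0 k : a k = 0 by apply: (psumr_eq0P _ s0) => // l _.
  have b0 k : b k = 0 by apply: (psumr_eq0P _ (etrans (esym sab) s0)) => // l _.
  by rewrite s0 mul0r !big1 ?subr0 // => k _; rewrite ?a0 ?b0 mul0r.
have s_gt0 : 0 < s by rewrite lt_def s_neq0.
(* Coupling the two weights: s * LHS = \sum_k \sum_l a k * b l * (y k - y l). *)
have mul_sum_b z : s * \sum_l b l * z l = \sum_k \sum_l a k * b l * z l.
  rewrite /s mulr_suml; apply: eq_bigr => k _.
  by rewrite mulr_sumr; apply: eq_bigr => l _; ring.
have mul_sum_a : s * \sum_k a k * y k = \sum_k \sum_l a k * b l * y k.
  rewrite {1}sab mulr_suml exchange_big /=; apply: eq_bigr => l _.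
  by rewrite mulr_sumr; apply: eq_bigr => k _; ring.
rewrite -(ler_pM2l s_gt0) mulrBr mul_sum_b mul_sum_a -sumrB.
have -> : s * (s * c) = \sum_k \sum_l a k * b l * c.
  by rewrite {2}sab -(mul_sum_b (fun=> c)) -mulr_suml.
apply: ler_sum => k _; rewrite -sumrB; apply: ler_sum => l _.
by rewrite -mulrBr ler_wpM2l ?mulr_ge0.
Qed.

Lemma stochastic_mul_diff_le (P : 'M[R]_N) (y : 'cV[R]_N) c i j :
  P *m const_mx 1 = const_mx 1 :> 'cV[R]_N -> (forall k l, y k 0 - y l 0 <= c) ->
  (P *m y) i 0 - (P *m y) j 0 <= (1 - \sum_k Num.min (P i k) (P j k)) * c.
Proof.
move=> P1 y_le; pose m k := Num.min (P i k) (P j k).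
have rowsum1 l : \sum_k P l k = 1.
  have /matrixP/(_ l 0) := P1; rewrite !mxE => <-.
  by apply: eq_bigr => k _; rewrite mxE mulr1.
have -> : 1 - \sum_k m k = \sum_k (P i k - m k) by rewrite sumrB rowsum1.
have -> : (P *m y) i 0 - (P *m y) j 0 =
    \sum_k (P i k - m k) * y k 0 - \sum_k (P j k - m k) * y k 0.
  by rewrite !mxE -!sumrB; apply: eq_bigr => k _; ring.
apply: sum_mul_diff_le => // [k | k |].
- by rewrite subr_ge0 ge_min lexx.
- by rewrite subr_ge0 ge_min lexx orbT.
- by rewrite !sumrB !rowsum1.
Qed.

Lemma diam_stochastic_mul (P : 'M[R]_N) (w : 'M[R]_(N, d)) : (0 < N)%N ->
  P *m const_mx 1 = const_mx 1 :> 'cV[R]_N -> diam (P *m w) <= (1 - dobrushin P) * diam w.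
Proof.
move=> N_gt0 P1; apply: diam_le => // i j.
have [e e_le1 ->] := row_dist_dual (P *m w) i j.
have y_le k l := mul_tr_diff_le_diam w k l e_le1.
rewrite -mulmxA (le_trans (stochastic_mul_diff_le i j P1 y_le)) //.
by rewrite ler_wpM2r ?diam_ge0 // lerD2l lerN2 dobrushin_le.
Qed.

End dobrushin_contraction.

Section matrix_calculus.
Variable R : realType.

Lemma cvg_mxP (T : Type) (F : set_system T) {FF : Filter F} m n
    (y : T -> 'M[R]_(m, n)) (Y : 'M[R]_(m, n)) :
  y s @[s --> F] --> Y <-> forall i j, y s i j @[s --> F] --> Y i j.
Proof.
split=> [yY i j | yY]; first exact: (cvg_comp _ _ yY (@coord_continuous R m n i j Y)).
apply/cvgrPdist_le => e e0; near=> s.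
rewrite [leLHS]/Num.Def.normr /= mx_normrE (bigmax_le _ (ltW e0)) //= => ij _.
rewrite !mxE; move: ij; near: s; apply: filter_forall => ij.
exact: (cvgrPdist_le _ _).1 (yY ij.1 ij.2) e e0.
Unshelve. all: by end_near. Qed.

Lemma is_derive_mxP m n (y : R -> 'M[R]_(m, n)) (t : R) (D : 'M[R]_(m, n)) :
  is_derive t 1 y D <-> forall i j, is_derive t 1 (fun s => y s i j) (D i j).
Proof.
split=> [[dy <-] i j | yD].
  split; first exact: (derivable_mxP y t 1).1 dy i j.
  by rewrite derive_mx // mxE.
have dy : derivable y t 1 by apply/derivable_mxP => i j; have [] := yD i j.
apply: DeriveDef => //; rewrite derive_mx //; apply/matrixP => i j.
by rewrite mxE derive_val.
Qed.

Lemma is_derive_cvg (V : normedModType R) (y : R -> V) (t : R) (D : V) :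
  is_derive t 1 y D -> y s @[s --> t] --> y t.
Proof. by move=> [dy _]; apply/differentiable_continuous/derivable1_diffP. Qed.

Lemma cvg_mulmxr (T : Type) (F : set_system T) {FF : Filter F} m n p
    (y : T -> 'M[R]_(m, n)) (Y : 'M[R]_(m, n)) (W : 'M[R]_(n, p)) :
  y s @[s --> F] --> Y -> y s *m W @[s --> F] --> Y *m W.
Proof.
move=> /cvg_mxP yY; apply/cvg_mxP => i k.
under eq_cvg do rewrite mxE; rewrite mxE.
apply: (cvg_big (op := +%R) (x0 := 0) (P := xpredT) add_continuous) => // l _.
by apply: cvgM => //; exact: cvg_cst.
Qed.

Lemma is_derive_mulmxr m n p (y : R -> 'M[R]_(m, n)) (t : R) (D : 'M[R]_(m, n))
    (W : 'M[R]_(n, p)) :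
  is_derive t 1 y D -> is_derive t 1 (fun s => y s *m W) (D *m W).
Proof.
move=> /is_derive_mxP yD; apply/is_derive_mxP => i k.
rewrite mxE; under eq_fun do rewrite mxE.
rewrite -fct_sumE; apply: is_derive_sum => l.
apply: is_derive_eq (is_deriveM (yD i l) (is_derive_cst (W l k) t 1)) _.
by rewrite scaler0 add0r mulrC.
Qed.

Lemma cvg_enorm (T : Type) (F : set_system T) {FF : Filter F} d
    (u : T -> 'rV[R]_d) (U : 'rV[R]_d) :
  u s @[s --> F] --> U -> enorm (u s) @[s --> F] --> enorm U.
Proof.
move=> /cvg_mxP uU; apply: (continuous_cvg _ (@sqrt_continuous R _)).
apply: (cvg_big (op := +%R) (x0 := 0) (P := xpredT) add_continuous) => // k _.
exact: (continuous_cvg _ (@exprn_continuous R 2 _)) (uU 0 k).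
Qed.

Lemma maxr_continuous : continuous (fun xy : R^o * R^o => (Num.max xy.1 xy.2 : R^o)).
Proof. by move=> xy; exact: continuous_max cvg_fst cvg_snd. Qed.

Lemma cvg_diam (T : Type) (F : set_system T) {FF : Filter F} N d
    (y : T -> 'M[R]_(N, d)) (Y : 'M[R]_(N, d)) : (0 < N)%N ->
  y s @[s --> F] --> Y -> diam (y s) @[s --> F] --> diam Y.
Proof.
move=> N_gt0 /cvg_mxP yY; rewrite diamE //; under eq_cvg do rewrite diamE //.
apply: (cvg_big (op := fun a b : R^o => Num.max a b) (x0 := 0) (P := xpredT) maxr_continuous)
  => // -[i j] _.
apply: cvg_enorm; apply/cvg_mxP => k l; rewrite !mxE.
by under eq_cvg do rewrite !mxE; exact: cvgB.
Qed.

End matrix_calculus.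

Section linear_ode.
Variable R : realType.

Lemma quadratic_form_le n (A : 'M[R]_n) K (w : 'I_n -> R) :
  (forall i l, `|A i l| <= K) ->
  \sum_i \sum_l A i l * (w i * w l) <= K * n%:R * \sum_i w i ^+ 2.
Proof.
move=> A_le; set S := \sum_i w i ^+ 2.
have AM_GM i l : 2 * (A i l * (w i * w l)) <= K * w i ^+ 2 + K * w l ^+ 2.
  have /andP[AK KA] : - K <= A i l <= K by rewrite -ler_norml.
  have : 0 <= (K - A i l) * (w i + w l) ^+ 2 + (K + A i l) * (w i - w l) ^+ 2.
    by rewrite addr_ge0 // mulr_ge0 ?sqr_ge0 //; lra.
  have -> : (K - A i l) * (w i + w l) ^+ 2 + (K + A i l) * (w i - w l) ^+ 2 =
    2 * (K * w i ^+ 2 + K * w l ^+ 2 - 2 * (A i l * (w i * w l))) by ring.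
  by rewrite pmulr_rge0 // subr_ge0.
rewrite -(@ler_pM2l _ 2) // mulr_sumr.
apply: le_trans (_ : \sum_i \sum_l (K * w i ^+ 2 + K * w l ^+ 2) <= _).
  by apply: ler_sum => i _; rewrite mulr_sumr; apply: ler_sum => l _.
rewrite (eq_bigr (fun i => K * w i ^+ 2 *+ n + K * S)); last first.
  by move=> i _; rewrite big_split /= sumr_const card_ord -mulr_sumr.
by rewrite big_split /= sumrMnl sumr_const card_ord -mulr_sumr -/S -mulr_natr; lra.
Qed.

Lemma gronwall_zero (L : R) (phi dphi : R -> R) : 0 <= L ->
  (forall s : R, 0 < s -> 0 <= phi s) -> phi s @[s --> 0^'+] --> 0 ->
  (forall s : R, 0 < s -> is_derive s 1 phi (dphi s)) ->
  (forall s : R, 0 < s -> dphi s <= L * phi s) ->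
  forall t : R, 0 < t -> phi t = 0.
Proof.
move=> L_ge0 phi_ge0 phi0 phi' dphi_le t t_gt0.
pose psi s := expR (- L * s) * phi s.
have psi' (s : R) : 0 < s -> is_derive s 1 psi (expR (- L * s) * (dphi s - L * phi s)).
  move=> s_gt0.
  have lin : is_derive s 1 (fun r : R => - L * r) (- L).
    apply: is_derive_eq (is_deriveZ (- L) (is_derive_id s 1)) _.
    by rewrite /GRing.scale /= mulr1.
  apply: is_derive_eq (is_deriveM (is_derive1_comp (is_derive_expR _) lin) (phi' s s_gt0)) _.
  rewrite /GRing.scale /=; ring.
have psi_le (s : R) : 0 < s <= t -> psi t <= psi s.
  case/andP=> s_gt0 s_le_t.
  have dpsi (r : R) : r \in `]0, t + 1[%R -> derivable psi r 1.
    by rewrite in_itv /= => /andP[r_gt0 _]; have [] := psi' r r_gt0.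
  apply: (@ler0_derive1_le_oo R psi 0 (t + 1)) => //.
  - move=> r; rewrite in_itv /= => /andP[r_gt0 _].
    rewrite derive1E; have [_ ->] := psi' r r_gt0.
    by rewrite mulr_ge0_le0 ?expR_ge0 // subr_le0 dphi_le.
  - move=> r r_in; apply/differentiable_continuous/derivable1_diffP/dpsi.
    by move: r_in; rewrite ?inE.
  - by rewrite in_itv /=; apply/andP; split; lra.
  - by rewrite in_itv /=; apply/andP; split; lra.
have psit_le0 : psi t <= 0.
  apply: (cvgr_to_ge phi0); near=> s.
  have s_gt0 : 0 < s by near: s; exact: nbhs_right_gt.
  have s_lt_t : s < t by near: s; exact: nbhs_right_lt.
  apply: le_trans (psi_le s _) _; first by rewrite s_gt0 ltW.
  rewrite /psi ler_piMl ?phi_ge0 // expR_le1 mulNr oppr_le0 mulr_ge0 // ltW //.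
apply/eqP; rewrite eq_le phi_ge0 // andbT.
by move: psit_le0; rewrite /psi pmulr_rle0 // expR_gt0.
Unshelve. all: by end_near. Qed.

Lemma linear_ode_zero n m (A : R -> 'M[R]_n) (K : R) (u : R -> 'M[R]_(n, m)) :
  (forall t i l, `|A t i l| <= K) -> u s @[s --> (0 : R)^'+] --> (0 : 'M[R]_(n, m)) ->
  (forall t : R, 0 < t -> is_derive t 1 u (A t *m u t)) ->
  forall t : R, 0 < t -> u t = 0.
Proof.
move=> A_le u0 u' t t_gt0.
have A_le' s i l : `|A s i l| <= `|K| by rewrite (le_trans (A_le s i l)) ?ler_norm.
pose phi s := \sum_i \sum_k u s i k ^+ 2.
pose dphi s := 2 * \sum_i \sum_k u s i k * (A s *m u s) i k.
have phi_ge0 s : 0 <= phi s.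
  by apply: sumr_ge0 => i _; apply: sumr_ge0 => k _; exact: sqr_ge0.
have phi0 : phi s @[s --> 0^'+] --> 0.
  have sum0 : \sum_(i < n) \sum_(k < m) (0 : 'M[R]_(n, m)) i k ^+ 2 = 0.
    by rewrite big1 // => i _; rewrite big1 // => k _; rewrite mxE expr0n.
  rewrite -[X in _ --> X]sum0.
  apply: (cvg_big (op := +%R) (x0 := 0) (P := xpredT) add_continuous) => // i _.
  apply: (cvg_big (op := +%R) (x0 := 0) (P := xpredT) add_continuous) => // k _.
  apply: (continuous_cvg _ (@exprn_continuous R 2 _)).
  by move/cvg_mxP : u0; apply.
have phi' (s : R) : 0 < s -> is_derive s 1 phi (dphi s).
  move=> s_gt0; have /is_derive_mxP u's := u' s s_gt0.
  have sq' i k : is_derive s 1 (fun r => u r i k ^+ 2) (2 * (u s i k * (A s *m u s) i k)).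
    change (is_derive s 1 (fun r => u r i k * u r i k) (2 * (u s i k * (A s *m u s) i k))).
    apply: is_derive_eq (is_deriveM (u's i k) (u's i k)) _.
    by rewrite /GRing.scale /=; ring.
  rewrite /dphi mulr_sumr; under eq_bigr do rewrite mulr_sumr.
  rewrite /phi -fct_sumE.
  apply: is_derive_sum => i; rewrite -fct_sumE; exact: is_derive_sum.
have dphi_le (s : R) : 0 < s -> dphi s <= 2 * (`|K| * n%:R) * phi s.
  move=> _; rewrite /dphi -mulrA ler_pM2l // /phi exchange_big [X in _ <= _ * X]exchange_big /=.
  rewrite mulr_sumr; apply: ler_sum => k _.
  rewrite (eq_bigr (fun i => \sum_l A s i l * (u s i k * u s l k))).
    exact: quadratic_form_le (A_le' s).
  by move=> i _; rewrite mxE mulr_sumr; apply: eq_bigr => l _; ring.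
have phit0 := gronwall_zero (mulr_ge0 (ler0n _ 2) (mulr_ge0 (normr_ge0 K) (ler0n _ n)))
  (fun s _ => phi_ge0 s) phi0 phi' dphi_le t_gt0.
apply/matrixP => i k; rewrite mxE; apply/eqP; rewrite -sqrf_eq0; apply/eqP.
have /psumr_eq0P row0 := phit0.
have /psumr_eq0P := row0 (fun i _ => sumr_ge0 _ (fun k _ => sqr_ge0 (u t i k))) i isT.
by apply => // l _; exact: sqr_ge0.
Qed.

Lemma linear_ode_unique n m (A : R -> 'M[R]_n) (K : R) (y z : R -> 'M[R]_(n, m))
    (y0 : 'M[R]_(n, m)) :
  (forall t i l, `|A t i l| <= K) ->
  y s @[s --> 0^'+] --> y0 -> z s @[s --> 0^'+] --> y0 ->
  (forall t : R, 0 < t -> is_derive t 1 y (A t *m y t)) ->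
  (forall t : R, 0 < t -> is_derive t 1 z (A t *m z t)) ->
  forall t : R, 0 < t -> y t = z t.
Proof.
move=> A_le y_y0 z_y0 y' z' t t_gt0; apply/eqP; rewrite -subr_eq0; apply/eqP.
apply: (@linear_ode_zero _ _ A K (fun s => y s - z s)) => // [|s s_gt0].
  by rewrite -[X in _ --> X](subrr y0); exact: cvgB.
by rewrite mulmxBr; exact: is_deriveB (y' s s_gt0) (z' s s_gt0).
Qed.

Lemma linear_ode_stochastic n (A : R -> 'M[R]_n) (K : R) (P : R -> 'M[R]_n) :
  (forall t i l, `|A t i l| <= K) -> (forall t, A t *m const_mx 1 = 0 :> 'cV[R]_n) ->
  P 0 = 1%:M -> P s @[s --> (0 : R)^'+] --> (1%:M : 'M[R]_n) ->
  (forall t : R, 0 < t -> is_derive t 1 P (A t *m P t)) ->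
  forall t : R, 0 <= t -> P t *m const_mx 1 = const_mx 1 :> 'cV[R]_n.
Proof.
move=> A_le A1 P0 P_0 P' t; rewrite le_eqVlt => /orP[/eqP <- | t_gt0].
  by rewrite P0 mul1mx.
apply: (linear_ode_unique (y := fun s => P s *m const_mx 1) (z := fun=> const_mx 1)
    (y0 := const_mx 1) A_le)
  => // [||s s_gt0|s _].
- by rewrite -[X in _ --> X](mul1mx (const_mx 1)); exact: cvg_mulmxr.
- exact: cvg_cst.
- by rewrite mulmxA; exact: is_derive_mulmxr (P' s s_gt0).
- by rewrite A1; exact: (is_derive_cst (const_mx 1 : 'cV[R]_n) s 1).
Qed.

Lemma linear_ode_fundamental n m (A : R -> 'M[R]_n) (K : R) (P : R -> 'M[R]_n)
    (y : R -> 'M[R]_(n, m)) :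
  (forall t i l, `|A t i l| <= K) ->
  P 0 = 1%:M -> P s @[s --> (0 : R)^'+] --> (1%:M : 'M[R]_n) ->
  (forall t : R, 0 < t -> is_derive t 1 P (A t *m P t)) ->
  y s @[s --> 0^'+] --> y 0 ->
  (forall t : R, 0 < t -> is_derive t 1 y (A t *m y t)) ->
  forall t : R, 0 <= t -> y t = P t *m y 0.
Proof.
move=> A_le P0 P_0 P' y_0 y' t; rewrite le_eqVlt => /orP[/eqP <- | t_gt0].
  by rewrite P0 mul1mx.
apply: (linear_ode_unique (z := fun s => P s *m y 0) A_le y_0) => // [|s s_gt0].
- by rewrite -[X in _ --> X](mul1mx (y 0)); exact: cvg_mulmxr.
- by rewrite mulmxA; exact: is_derive_mulmxr (P' s s_gt0).
Qed.

End linear_ode.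

Section continuous_induction.
Variable R : realType.

Lemma continuous_barrier (h : R -> R) (c r : R) : c < r -> h 0 < r ->
  h s @[s --> 0^'+] --> h 0 -> (forall t : R, 0 < t -> h s @[s --> t] --> h t) ->
  (forall t : R, 0 < t -> (forall s : R, 0 <= s <= t -> h s <= r) -> h t <= c) ->
  forall t : R, 0 <= t -> h t < r.
Proof.
move=> c_lt_r h0_lt_r h_0 h_cont bootstrap t0 t0_ge0.
rewrite ltNge; apply/negP => r_le_ht0.
pose B := [set t : R | 0 <= t /\ r <= h t].
have B_lb : lbound B 0 by move=> s [].
have hasB : has_inf B by split; [exists t0 | exists 0].
have [tau tauE] : {tau | tau = inf B} by exists (inf B).
have tau_ge0 : 0 <= tau by rewrite tauE; apply: lb_le_inf => //; exists t0.
have tau_le (s : R) : B s -> tau <= s by move=> Bs; rewrite tauE; apply: (ge_inf hasB.2 Bs).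
have before (s : R) : 0 <= s < tau -> h s < r.
  case/andP=> s_ge0 s_lt; rewrite ltNge; apply/negP => hs.
  by have := tau_le s (conj s_ge0 hs); rewrite leNgt s_lt.
have h_tau : h tau < r.
  have [-> // | tau_neq0] := eqVneq tau 0.
  have tau_gt0 : 0 < tau by rewrite lt_def tau_neq0.
  apply: le_lt_trans c_lt_r.
  apply: (cvgr_to_le (cvg_at_left_filter (h_cont tau tau_gt0))); near=> s.
  have s_gt0 : 0 < s by near: s; exact: nbhs_left_gt.
  have s_lt : s < tau by near: s; exact: nbhs_left_lt.
  apply: bootstrap s_gt0 _ => s' /andP[s'_ge0 s'_le].
  by apply/ltW/before; rewrite s'_ge0 (le_lt_trans s'_le s_lt).
have h_right : h s @[s --> tau^'+] --> h tau.
  have [tau0 | tau_neq0] := eqVneq tau 0; first by rewrite tau0.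
  by apply/cvg_at_right_filter/h_cont; rewrite lt_def tau_neq0.
have : \forall s \near tau^'+, h s < r by exact: cvgr_lt h_right _ h_tau.
move=> /nbhs_ballP[e e_gt0 after].
have [b [b_ge0 r_le_hb]] := inf_adherent e_gt0 hasB; rewrite -tauE => b_lt.
have [b_tau | b_neq_tau] := eqVneq b tau; first by move: h_tau; rewrite -b_tau ltNge r_le_hb.
have tau_lt_b : tau < b by rewrite lt_def b_neq_tau tau_le.
have b_near : ball tau e b.
  by rewrite -ball_normE /= distrC ger0_norm ?subr_ge0 ?ltW // ltrBlDl.
by have := after b b_near tau_lt_b; rewrite ltNge r_le_hb.
Unshelve. all: by end_near. Qed.

End continuous_induction.

Section position_bound.
Variable R : realType.
Local Notation mu := (@lebesgue_measure R).

Lemma continuous_FTC2_le (f F g : R -> R) (a b : R) : a < b ->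
  {within `[a, b], continuous f} -> derivable_oo_LRcontinuous F a b ->
  {in `]a, b[%R, F^`() =1 f} -> measurable_fun `[a, b] g ->
  (forall s : R, a <= s <= b -> 0 <= g s) -> (forall s : R, a <= s <= b -> f s <= g s) ->
  ((F b - F a)%:E <= \int[mu]_(s in `[a, b]) (g s)%:E)%E.
Proof.
move=> ab f_cont F_der F'f g_meas g_ge0 f_le_g.
rewrite EFinB -(continuous_FTC2 ab f_cont F_der F'f).
have f_int : mu.-integrable `[a, b] (EFin \o f).
  by apply: continuous_compact_integrable => //; exact: segment_compact.
rewrite integralE; apply: le_trans (leeB (lexx _) (integral_ge0 _ _)) _.
  by move=> s _; exact: funeneg_ge0.
rewrite sube0; apply: ge0_le_integral => //.
- by apply: measurable_realfun.measurable_funepos; exact: measurable_int f_int.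
- by apply/measurable_realfun.measurable_EFinP.
- move=> s; rewrite /= in_itv /= => s_in.
  by rewrite funeposE /= ge_max !lee_fin f_le_g ?g_ge0.
Qed.

Lemma diam_le_integral N d (x v : R -> 'M[R]_(N, d)) (g : R -> R) (t c : R) :
  (0 < N)%N -> 0 < t ->
  x s @[s --> 0^'+] --> x 0 -> v s @[s --> 0^'+] --> v 0 ->
  (forall s : R, 0 < s -> is_derive s 1 x (v s)) ->
  (forall s : R, 0 < s -> v r @[r --> s] --> v s) ->
  measurable_fun `[0, t] g -> (forall s : R, 0 <= s <= t -> diam (v s) <= g s) ->
  (\int[mu]_(s in `[0%R, t]) (g s)%:E <= c%:E)%E ->
  diam (x t) <= diam (x 0) + c.
Proof.
move=> N_gt0 t_gt0 x_0 v_0 x' v_cont g_meas v_le_g int_le.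
apply: diam_le => // i j; have [e e_le1 ->] := row_dist_dual (x t) i j.
pose p (M : 'M[R]_(N, d)) := (M *m e^T) i 0 - (M *m e^T) j 0.
have p_cvg (F : set_system R) (FF : Filter F) (y : R -> 'M[R]_(N, d)) Y :
    y s @[s --> F] --> Y -> p (y s) @[s --> F] --> p Y.
  by move=> /(cvg_mulmxr (W := e^T))/cvg_mxP yY; apply: cvgB; exact: yY.
have p' (s : R) : 0 < s -> is_derive s 1 (fun r => p (x r)) (p (v s)).
  move=> /x'/(is_derive_mulmxr e^T)/is_derive_mxP xe.
  exact: is_deriveB (xe i 0) (xe j 0).
suff : ((p (x t) - p (x 0))%:E <= c%:E)%E.
  by rewrite lee_fin; have := mul_tr_diff_le_diam (x 0) i j e_le1; rewrite /p; lra.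
apply: le_trans int_le.
apply: (continuous_FTC2_le (f := fun s => p (v s)) (F := fun s => p (x s)) t_gt0) => //.
- apply/(continuous_within_itvP _ t_gt0); split; last 2 first.
  + exact: p_cvg.
  + by apply: cvg_at_left_filter; apply: p_cvg; exact: v_cont.
  by move=> s; rewrite in_itv /= => /andP[s_gt0 _]; apply: p_cvg; exact: v_cont.
- split; last 2 first.
  + exact: p_cvg.
  + by apply: cvg_at_left_filter; apply: p_cvg; exact: is_derive_cvg (x' t t_gt0).
  by move=> s; rewrite in_itv /= => /andP[s_gt0 _]; have [] := p' s s_gt0.
- move=> s; rewrite in_itv /= => /andP[s_gt0 _].
  by rewrite derive1E; have [_ ->] := p' s s_gt0.
- by move=> s s_in; exact: le_trans (diam_ge0 N_gt0 (v s)) (v_le_g s s_in).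
- by move=> s s_in; exact: le_trans (mul_tr_diff_le_diam (v s) i j e_le1) (v_le_g s s_in).
Qed.

Lemma sup_image_between (f : R -> R) (A : set R) (a r : R) :
  A a -> (forall s, A s -> f s <= r) -> f a <= sup [set f s | s in A] <= r.
Proof.
move=> Aa f_le; have ub : ubound [set f s | s in A] r by move=> _ [s As <-]; exact: f_le.
apply/andP; split; last by apply: ge_sup => //; exists (f a), a.
by apply: sup_upper_bound; [split; [exists (f a), a | exists r] | exists a].
Qed.

Lemma diam_bootstrap_lt N d (x v : R -> 'M[R]_(N, d)) (g : R -> R) (r : R) :
  (0 < N)%N ->
  x s @[s --> 0^'+] --> x 0 -> v s @[s --> 0^'+] --> v 0 ->
  (forall s : R, 0 < s -> is_derive s 1 x (v s)) ->
  (forall s : R, 0 < s -> v u @[u --> s] --> v s) ->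
  measurable_fun (`[0, +oo[ : set R) g -> (forall s : R, 0 <= s -> 0 <= g s) ->
  (forall t : R, 0 <= t -> (forall s : R, 0 <= s <= t -> diam (x s) <= r) ->
     diam (v t) <= g t) ->
  (\int[mu]_(s in `[0%R, +oo[) (g s)%:E < (r - diam (x 0))%:E)%E ->
  forall t : R, 0 <= t -> diam (x t) < r.
Proof.
move=> N_gt0 x_0 v_0 x' v_cont g_meas g_ge0 v_le int_lt.
have g_ge0' s : `[0, +oo[ s -> (0 <= (g s)%:E)%E.
  by rewrite /= in_itv /= andbT lee_fin => /g_ge0.
set I := (\int[mu]_(s in _) _)%E in int_lt.
have I_ge0 : (0 <= I)%E by exact: integral_ge0.
have I_fin : I \is a fin_num by rewrite ge0_fin_numE // (lt_trans int_lt) ?ltry.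
have I_lt : diam (x 0) + fine I < r by rewrite -ltrBrDl -lte_fin fineK.
apply: (continuous_barrier (h := fun t => diam (x t)) (c := diam (x 0) + fine I)) => //.
- by rewrite (le_lt_trans _ I_lt) // lerDl fine_ge0.
- exact: cvg_diam N_gt0 x_0.
- by move=> s s_gt0; exact: cvg_diam N_gt0 (is_derive_cvg (x' s s_gt0)).
move=> t t_gt0 x_le; apply: (diam_le_integral (g := g) N_gt0 t_gt0 x_0 v_0 x' v_cont).
- by apply: measurable_funS g_meas => // s; rewrite /= !in_itv /= => /andP[-> _].
- move=> s /andP[s_ge0 s_le]; apply: v_le => // s' /andP[s'_ge0 s'_le].
  by apply: x_le; rewrite s'_ge0 (le_trans s'_le s_le).
rewrite fineK //; apply: ge0_subset_integral => //.
  exact/measurable_realfun.measurable_EFinP.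
by move=> s; rewrite /= !in_itv /= => /andP[-> _].
Qed.

End position_bound.

Section alignment_model.
Variables (R : realType) (N d : nat).
Variable Psi : 'I_N -> 'I_N -> 'M[R]_(N, d) -> 'M[R]_(N, d) -> R.

Lemma Qmat_rowsum x v i : \sum_j Qmat Psi x v i j = 0.
Proof.
rewrite (bigD1 i) //= mxE eqxx (eq_bigr (fun j => Psi i j x v)) ?addNr // => j ji.
by rewrite mxE eq_sym (negbTE ji).
Qed.

Lemma Qmat_mul_const x v m (c : R) : Qmat Psi x v *m const_mx c = 0 :> 'M[R]_(N, m).
Proof.
apply/matrixP => i k; rewrite [LHS]mxE [RHS]mxE.
rewrite (eq_bigr (fun j => Qmat Psi x v i j * c)) => [|j _]; last by rewrite [const_mx c j k]mxE.
by rewrite -mulr_suml Qmat_rowsum mul0r.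
Qed.

Lemma align_forceE (alpha : R) x v (w : 'M[R]_(N, d)) :
  align_force alpha (Qmat Psi x v) w = alpha *: (Qmat Psi x v *m w).
Proof.
apply/matrixP => i k; rewrite !mxE; congr (_ * _).
under eq_bigr do rewrite mulrBr.
by rewrite sumrB -mulr_suml Qmat_rowsum mul0r subr0.
Qed.

Lemma Qmat_bounded :
  (forall i j, i != j -> forall x v, 0 <= Psi i j x v) ->
  (forall i j, i != j -> exists M : R, forall x v, Psi i j x v <= M) ->
  exists K : R, forall x v i l, `|Qmat Psi x v i l| <= K.
Proof.
move=> Psi_ge0 Psi_bd.
have /choice[Mf Mf_bd] : forall p : 'I_N * 'I_N,
    exists M : R, p.1 != p.2 -> forall x v, Psi p.1 p.2 x v <= M.
  move=> [i j] /=; have [_ | ij] := eqVneq i j; first by exists 0.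
  by have [M PsiM] := Psi_bd i j ij; exists M.
pose M := \sum_p `|Mf p|.
have M_ge0 : 0 <= M by apply: sumr_ge0 => p _.
have Psi_le i j : i != j -> forall x v, Psi i j x v <= M.
  move=> ij x v; apply: le_trans (Mf_bd (i, j) ij x v) _.
  by rewrite (le_trans (ler_norm _)) // /M (bigD1 (i, j)) //= lerDl sumr_ge0.
exists (M *+ N) => x v i l; rewrite mxE.
have [-> | il] := eqVneq i l.
  rewrite normrN ger0_norm; last by apply: sumr_ge0 => k kl; rewrite Psi_ge0 // eq_sym.
  apply: le_trans (_ : \sum_(k < N | k != l) M <= _).
    by apply: ler_sum => k kl; rewrite Psi_le // eq_sym.
  by rewrite sumr_const -[in leRHS](card_ord N) ler_wpMn2l // max_card.
rewrite ger0_norm ?Psi_ge0 // (le_trans (Psi_le i l il x v)) //.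
by rewrite -[leLHS]mulr1n ler_wpMn2l // (leq_ltn_trans (leq0n l) (ltn_ord l)).
Qed.

Lemma velocity_diam_le_dobrushin (alpha : R) (x v : R -> 'M[R]_(N, d))
    (P : R -> 'M[R]_N) :
  (0 < N)%N -> 0 < alpha ->
  (forall i j, i != j -> forall x v, 0 <= Psi i j x v) ->
  (forall i j, i != j -> exists M : R, forall x v, Psi i j x v <= M) ->
  v s @[s --> 0^'+] --> v 0 ->
  (forall t : R, 0 < t ->
     is_derive t 1 v (align_force alpha (Qmat Psi (x t) (v t)) (v t))) ->
  P 0 = 1%:M -> P s @[s --> 0^'+] --> (1%:M : 'M[R]_N) ->
  (forall t : R, 0 < t -> is_derive t 1 P (alpha *: (Qmat Psi (x t) (v t) *m P t))) ->
  forall t : R, 0 <= t -> diam (v t) <= (1 - dobrushin (P t)) * diam (v 0).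
Proof.
move=> N_gt0 alpha_gt0 Psi_ge0 Psi_bd v_0 v' P0 P_0 P' t t_ge0.
have [K QK] := Qmat_bounded Psi_ge0 Psi_bd.
pose A t := alpha *: Qmat Psi (x t) (v t).
have AK s i l : `|A s i l| <= alpha * K.
  by rewrite mxE normrM gtr0_norm // ler_wpM2l ?(ltW alpha_gt0) ?QK.
have A1 s : A s *m const_mx 1 = 0 :> 'cV[R]_N.
  by rewrite -scalemxAl Qmat_mul_const scaler0.
have AP (s : R) : 0 < s -> is_derive s 1 P (A s *m P s).
  by move=> s_gt0; rewrite -scalemxAl; exact: P'.
have Av (s : R) : 0 < s -> is_derive s 1 v (A s *m v s).
  by move=> s_gt0; rewrite -scalemxAl -align_forceE; exact: v'.
rewrite (linear_ode_fundamental AK P0 P_0 AP v_0 Av t_ge0).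
exact: diam_stochastic_mul N_gt0 (linear_ode_stochastic AK A1 P0 P_0 AP t_ge0).
Qed.

End alignment_model.

Unset Implicit Arguments.

Theorem proposition4p3 (R : realType) (N d : nat) (hN : (0 < N)%N) (hd : (0 < d)%N)
  (alpha : R) (halpha : 0 < alpha)
  (Psi : 'I_N -> 'I_N -> 'M[R]_(N, d) -> 'M[R]_(N, d) -> R)
  (hPsi_nn : forall i j, i != j -> forall x v, 0 <= Psi i j x v)
  (hPsi_bd : forall i j, i != j -> exists M : R, forall x v, Psi i j x v <= M)
  (hPsi_lip : forall i j, i != j -> locally_lipschitz2 (Psi i j))
  (x v : R -> 'M[R]_(N, d))
  (hx0 : x s @[s --> 0^'+] --> x 0)
  (hv0 : v s @[s --> 0^'+] --> v 0)
  (hx : forall t : R, 0 < t -> is_derive t 1 x (v t))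
  (hv : forall t : R, 0 < t ->
        is_derive t 1 v (align_force alpha (Qmat Psi (x t) (v t)) (v t)))
  (P : R -> R -> 'M[R]_N)
  (hPtt : forall t : R, 0 <= t -> P t t = 1%:M)
  (hPt : forall s t : R, 0 <= s < t ->
         is_derive t 1 (P s) (alpha *: (Qmat Psi (x t) (v t) *m P s t)))
  (hPt0 : forall s : R, 0 <= s -> P s u @[u --> s^'+] --> P s s)
  (hPs : forall s t : R, 0 < s < t ->
         is_derive s 1 (fun u => P u t) (- alpha *: (P s t *m Qmat Psi (x s) (v s))))
  (C : R -> R -> R)
  (hC_nn : forall t r : R, 0 <= t -> 0 <= r -> 0 <= C t r)
  (hCa : forall t : R, 0 <= t ->
         {in `[0, +oo[ &, {homo C t : r1 r2 / r1 <= r2}})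
  (hCb : forall r : R, diam (x 0) <= r -> C t r @[t --> +oo] --> 0)
  (hCc : forall t : R, 0 <= t ->
         1 - dobrushin (P 0 t) <= C t (sup [set diam (x s) | s in `[0, t]]))
  (hr0 : exists r0 : R, diam (x 0) <= r0 /\
         measurable_fun (`[0, +oo[ : set R) (fun s => C s r0) /\
         ((diam (v 0))%:E * \int[lebesgue_measure]_(s in (`[0%R, +oo[%classic : set R)) (C s r0)%:E
            < (r0 - diam (x 0))%:E)%E) :
  (exists M : R, forall t : R, 0 <= t -> diam (x t) <= M) /\
  diam (v t) @[t --> +oo] --> 0.
Proof.
have P00 := hPtt 0 (lexx 0).
have P_0 : P 0 s @[s --> 0^'+] --> (1%:M : 'M[R]_N) by rewrite -P00; exact: hPt0.
have P' (t : R) : 0 < t -> is_derive t 1 (P 0) (alpha *: (Qmat Psi (x t) (v t) *m P 0 t)).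
  by move=> t_gt0; apply: hPt; rewrite lexx.
have v_diam := velocity_diam_le_dobrushin hN halpha hPsi_nn hPsi_bd hv0 hv P00 P_0 P'.
have [r0 [X0_le_r0 [C_meas int_lt]]] := hr0.
have r0_ge0 : 0 <= r0 := le_trans (diam_ge0 hN _) X0_le_r0.
have v_le (t : R) : 0 <= t -> (forall s : R, 0 <= s <= t -> diam (x s) <= r0) ->
    diam (v t) <= diam (v 0) * C t r0.
  move=> t_ge0 x_le; rewrite mulrC (le_trans (v_diam t t_ge0)) // ler_wpM2r ?diam_ge0 //.
  have /andP[X0_le_sup sup_le] : diam (x 0) <= sup [set diam (x s) | s in `[0, t]] <= r0.
    by apply: sup_image_between => [|s]; rewrite /= in_itv /= ?lexx ?t_ge0 //; exact: x_le.
  have sup_ge0 := le_trans (diam_ge0 hN _) X0_le_sup.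
  apply: le_trans (hCc t t_ge0) (hCa t t_ge0 _ _ _ _ sup_le);
    by rewrite ?inE /= in_itv /= andbT // (le_trans sup_ge0 sup_le).
have x_lt : forall t : R, 0 <= t -> diam (x t) < r0.
  apply: (diam_bootstrap_lt (g := fun s => diam (v 0) * C s r0) hN hx0 hv0 hx) => //.
  - by move=> s s_gt0; exact: is_derive_cvg (hv s s_gt0).
  - by apply: measurable_realfun.measurable_funM => //; exact: measurable_cst.
  - by move=> s s_ge0; rewrite mulr_ge0 ?diam_ge0 ?hC_nn.
  under eq_integral do rewrite EFinM.
  rewrite ge0_integralZl ?lee_fin ?diam_ge0 //; last 2 first.
  - by apply/measurable_realfun.measurable_EFinP.
  - by move=> s; rewrite /= in_itv /= andbT lee_fin => s_ge0; exact: hC_nn.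
split; first by exists r0 => t t_ge0; exact/ltW/x_lt.
have C_0 : diam (v 0) * C t r0 @[t --> +oo] --> 0.
  by rewrite -[X in _ --> X](mulr0 (diam (v 0))); exact: cvgM (cvg_cst _) (hCb r0 X0_le_r0).
apply: (squeeze_cvgr _ (cvg_cst 0) C_0); near=> t.
have t_ge0 : 0 <= t by near: t; apply: nbhs_pinfty_ge; rewrite num_real.
by rewrite diam_ge0 //= v_le // => s /andP[s_ge0 _]; exact/ltW/x_lt.
Unshelve. all: by end_near. Qed.
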